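(* Let Assumptions 1 and 2 hold and $\eta>0$. Define $H:\mathbb{R}^N_{++}\to\mathbb{R}^N_{++}$ by $H(y)=\nabla_\theta\big(e^{\varphi_1(\theta)}\big)\big|_{\theta=\log y}$ (componentwise logarithm), and assume $H$ is a bijection of $\mathbb{R}^N_{++}$ onto itself with inverse $\Phi=H^{-1}$. Let $u_1,\dots,u_T\in\mathbb{R}^N$ be arbitrary and let $x_t=\nabla\varphi_\eta(\theta_{t-1})$, $t=1,\dots,T$, be the SSA (equivalently FTRL) choices. Then $x_t\in\mathbb{R}^N_{++}$ and, writing $\alpha(x)=\log\Phi(x)$ (componentwise), for all $t\ge1$ with $t+1\le T$ and all $j\in A$, $$x_{t+1,j}=\frac{H_j\big(e^{u_t/\eta+\alpha(x_t)}\big)}{\sum_{i=1}^N H_i\big(e^{u_t/\eta+\alpha(x_t)}\big)},$$ where $e^{v}$ denotes the componentwise exponential of a vector $v$.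
   Context: Let $N\ge 2$, $A=\{1,\dots,N\}$, and $\Delta_N=\{x\in\mathbb{R}^N: x_i\ge 0,\ \sum_i x_i=1\}$. Let $\epsilon=(\epsilon_1,\dots,\epsilon_N)$ be a random vector satisfying Assumption 1: each $\epsilon_i$ is integrable with $\mathbb{E}[\epsilon_i]=0$, and the law of $\epsilon$ is absolutely continuous with respect to Lebesgue measure on $\mathbb{R}^N$ with support all of $\mathbb{R}^N$. For $\eta>0$ the social surplus function is $\varphi_\eta(\theta)=\mathbb{E}[\max_{j\in A}(\theta_j+\eta\epsilon_j)]$, $\theta\in\mathbb{R}^N$; thus $\varphi_\eta(\theta)=\eta\varphi_1(\theta/\eta)$. $\varphi_\eta$ is convex and differentiable with $\nabla\varphi_\eta(\theta)\in\Delta_N$. Assumption 2: $\varphi_1$ is twice continuously differentiable and there is a constant $L>0$ with $2\,\mathrm{tr}(\nabla^2\varphi_1(\theta))\le L$ for all $\theta\in\mathbb{R}^N$. Set $\theta_0=0$, $\theta_t=\sum_{s=1}^tu_s$; $\mathbb{R}^N_{++}$ is the set of vectors with all coordinates strictly positive. *)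

From HB Require Import structures.
From mathcomp Require Import all_boot all_order all_algebra.
From mathcomp Require Import all_classical all_reals all_analysis.
Set Implicit Arguments. Unset Strict Implicit. Unset Printing Implicit Defensive.
Import Order.TTheory GRing.Theory Num.Theory.
Import numFieldNormedType.Exports.
Local Open Scope classical_set_scope.
Local Open Scope ring_scope.

(* Vectors of R^N are row vectors 'rV[R]_N; component j of v is v ord0 j. *)

Section Defs.
Variables (R : realType) (N : nat).

Definition partial (i : 'I_N) (f : 'rV[R]_N -> R) (x : 'rV[R]_N) : R :=
  'D_(delta_mx ord0 i) f x.

Definition grad (f : 'rV[R]_N -> R) (x : 'rV[R]_N) : 'rV[R]_N :=
  \row_i partial i f x.

Definition C2 (f : 'rV[R]_N -> R) : Prop :=
  (forall x, differentiable f x) /\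
  (forall i x, differentiable (partial i f) x) /\
  (forall i j, continuous (partial j (partial i f))).

Definition hess_trace (f : 'rV[R]_N -> R) (x : 'rV[R]_N) : R :=
  \sum_i partial i (partial i f) x.

Definition posv (y : 'rV[R]_N) : Prop := forall j, 0 < y ord0 j.

Definition vexp (v : 'rV[R]_N) : 'rV[R]_N := map_mx (@expR R) v.
Definition vlog (v : 'rV[R]_N) : 'rV[R]_N := map_mx (@ln R) v.

Definition box (a b : 'rV[R]_N) : set 'rV[R]_N :=
  [set x | forall i, a ord0 i <= x ord0 i <= b ord0 i].
Definition box_vol (a b : 'rV[R]_N) : R := \prod_i (b ord0 i - a ord0 i).

Definition lebesgue_null (B : set 'rV[R]_N) : Prop :=
  forall e : R, 0 < e -> exists a b : nat -> 'rV[R]_N,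
    (forall k i, a k ord0 i <= b k ord0 i) /\
    B `<=` \bigcup_k box (a k) (b k) /\
    (forall n, \sum_(k < n) box_vol (a k) (b k) <= e).

Variables (d : measure_display) (Omega : measurableType d)
  (P : probability Omega R).

Definition rvec (eps : 'I_N -> Omega -> R) (w : Omega) : 'rV[R]_N :=
  \row_i eps i w.

Definition assumption1 (eps : 'I_N -> Omega -> R) : Prop :=
  (forall i, measurable_fun setT (eps i)) /\
  (forall i, P.-integrable setT (EFin \o eps i)) /\
  (forall i, (\int[P]_w (eps i w)%:E = 0)%E) /\
  (* law of eps absolutely continuous w.r.t. Lebesgue measure on R^N *)
  (forall B, lebesgue_null B ->
     exists A, measurable A /\ rvec eps @^-1` B `<=` A /\ P A = 0%E) /\
  (* support of the law of eps is all of R^N *)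
  (forall a b : 'rV[R]_N, (forall i, a ord0 i < b ord0 i) ->
     (0 < P [set w | forall i, (a ord0 i < eps i w < b ord0 i)%R])%E).

Definition phi (eps : 'I_N -> Omega -> R) (eta : R) (theta : 'rV[R]_N) : R :=
  fine (\int[P]_w
          (\big[Order.max/-oo%E]_(j < N) ((theta ord0 j + eta * eps j w)%:E))).

Definition assumption2 (eps : 'I_N -> Omega -> R) (L : R) : Prop :=
  C2 (phi eps 1) /\ 0 < L /\
  (forall theta, 2 * hess_trace (phi eps 1) theta <= L).

Definition Hmap (eps : 'I_N -> Omega -> R) (y : 'rV[R]_N) : 'rV[R]_N :=
  grad (fun theta => expR (phi eps 1 theta)) (vlog y).

Definition cumul (u : nat -> 'rV[R]_N) (t : nat) : 'rV[R]_N :=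
  \sum_(1 <= s < t.+1) u s.

Definition ssa (eps : 'I_N -> Omega -> R) (eta : R) (u : nat -> 'rV[R]_N)
  (t : nat) : 'rV[R]_N := grad (phi eps eta) (cumul u t.-1).

End Defs.

From HB Require Import structures.
From mathcomp Require Import all_boot all_order all_algebra.
From mathcomp Require Import all_classical all_reals all_analysis.
From mathcomp Require Import measurable_realfun.
Import Order.TTheory GRing.Theory Num.Theory.
Import numFieldNormedType.Exports.
Local Open Scope classical_set_scope.
Local Open Scope ring_scope.

(** The surplus function satisfies [phi_1 (theta + c 1) = phi_1 theta + c] and
    [phi_eta theta = eta phi_1 (theta / eta)].  Hence [grad phi_1] is invariant
    along the diagonal, its coordinates sum to [1], and the SSA choice is
    [x_t = grad phi_1 z] with [z = theta_(t-1) / eta].  Since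
    [H (exp z) = exp (phi_1 z) grad phi_1 z], positivity of [H] gives
    [x_t > 0], and [H (exp (z - phi_1 z 1)) = x_t] gives
    [Phi x_t = exp (z - phi_1 z 1)].  Then
    [u_t / eta + alpha x_t = z' - phi_1 z 1] with [z' = theta_t / eta], so
    [H (exp (u_t / eta + alpha x_t))] is the positive multiple
    [exp (phi_1 z' - phi_1 z)] of [grad phi_1 z' = x_(t+1)], whose
    coordinates sum to [1]. *)

Lemma abse_le (R : realDomainType) (x M : \bar R) :
  (- M <= x -> x <= M -> `|x| <= M)%E.
Proof.
move: x M => [x| |] [m| |] //=.
- by rewrite !lee_fin => h1 h2; rewrite ler_norml h1 h2.
- by move=> _ _; rewrite leey.
Qed.

Section Surplus.
Variables (R : realType) (N : nat) (d : measure_display)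
  (Omega : measurableType d) (P : probability Omega R)
  (eps : 'I_N -> Omega -> R).
Hypotheses (A1 : assumption1 P eps) (N_gt0 : (0 < N)%N).
Local Open Scope ereal_scope.

Lemma measurable_bigmaxe (I : Type) (s : seq I) (F : I -> Omega -> \bar R) :
  (forall i, measurable_fun [set: Omega] (F i)) ->
  measurable_fun [set: Omega] (fun w => \big[Order.max/-oo]_(j <- s) F j w).
Proof.
move=> mF; elim: s => [|a s ih].
  by under eq_fun do rewrite big_nil; exact: measurable_cst.
under eq_fun do rewrite big_cons.
exact: measurable_maxe.
Qed.

Lemma integrable_surplus (theta : 'rV[R]_N) :
  P.-integrable [set: Omega] (fun w =>
    \big[Order.max/-oo]_(j < N) (theta ord0 j + eps j w)%R%:E).
Proof.
case: A1 => meps [ieps _].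
pose F j w := (theta ord0 j + eps j w)%R%:E.
have iF j : P.-integrable setT (F j).
  rewrite /F; under eq_fun do rewrite EFinD.
  apply: (integrableD measurableT); last exact: ieps.
  exact: finite_measure_integrable_cst.
apply: (le_integrable measurableT (g := fun w => \sum_(j < N) `|F j w|)).
- apply: measurable_bigmaxe => j; apply/measurable_EFinP.
  by apply: measurable_funD; [exact: measurable_cst | exact: meps].
- move=> w _; pose j0 : 'I_N := Ordinal N_gt0.
  have le_sum j : `|F j w| <= \sum_(i < N) `|F i w|.
    by rewrite (bigD1 j) //= leeDl // sume_ge0.
  rewrite [leRHS]gee0_abs; last exact: le_trans (abse_ge0 _) (le_sum j0).
  apply: abse_le.
  + rewrite [leRHS](bigD1 j0) //= le_max; apply/orP; left.
    by rewrite leeNl (le_trans (lee_abs _)) // abseN le_sum.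
  + apply: bigmax_le (leNye _) _ => j _.
    exact: le_trans (lee_abs _) (le_sum j).
- by apply: (integrable_sum measurableT) => j _; exact: integrable_abse.
Qed.

Lemma phi1E (theta : 'rV[R]_N) : phi P eps 1 theta =
  fine (\int[P]_w \big[Order.max/-oo]_(j < N) (theta ord0 j + eps j w)%R%:E).
Proof.
congr (fine _); apply: eq_integral => w _.
by apply: eq_bigr => j _; rewrite mul1r.
Qed.

Local Close Scope ereal_scope.

Lemma phi1_shift (theta : 'rV[R]_N) (c : R) :
  phi P eps 1 (theta + c *: const_mx 1) = phi P eps 1 theta + c.
Proof.
rewrite !phi1E.
have -> : (fun w => \big[Order.max/-oo%E]_(j < N)
      ((theta + c *: const_mx 1) ord0 j + eps j w)%:E) =
    (fun w => \big[Order.max/-oo%E]_(j < N) (theta ord0 j + eps j w)%:E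
      + c%:E)%E.
  apply/funext => w.
  rewrite (big_morph (fun x => x + c%:E)%E (fun x y => adde_maxl x y c%:E)
    (addNye _)).
  by apply: eq_bigr => j _; rewrite !mxE mulr1 -EFinD addrAC.
have surplus_fin := integrable_fin_num measurableT (integrable_surplus theta).
rewrite integralD //; last 2 first.
- exact: integrable_surplus.
- exact: finite_measure_integrable_cst.
by rewrite integral_cst // [X in (c%:E * X)%E]probability_setT mule1 fineD.
Qed.

Lemma phi_scale (eta : R) (theta : 'rV[R]_N) : 0 < eta ->
  phi P eps eta theta = eta * phi P eps 1 (eta^-1 *: theta).
Proof.
move=> eta_gt0; rewrite phi1E /phi.
have eta_ge0 : (0 <= eta%:E)%E by rewrite lee_fin ltW.
have -> : (fun w => \big[Order.max/-oo%E]_(j < N)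
      (theta ord0 j + eta * eps j w)%:E) =
    (fun w => eta%:E * \big[Order.max/-oo%E]_(j < N)
      ((eta^-1 *: theta) ord0 j + eps j w)%:E)%E.
  apply/funext => w.
  rewrite (big_morph (fun x => eta%:E * x)%E
    (fun x y => @maxe_pMr _ eta%:E x y isT eta_ge0) (_ : _ = -oo%E));
    last by rewrite mulrNy gtr0_sg // mul1e.
  apply: eq_bigr => j _; rewrite !mxE -EFinM mulrDr mulrA.
  by rewrite divff ?gt_eqF // mul1r.
rewrite integralZl //; last exact: integrable_surplus.
by rewrite fineM // (integrable_fin_num measurableT (integrable_surplus _)).
Qed.

End Surplus.

Section DirectionalDerivatives.
Variables (R : realType) (N : nat).
Implicit Types (f : 'rV[R]_N -> R) (x v : 'rV[R]_N).

Lemma derive_shift_equivariant f a c x v :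
  (forall y, f (y + a) = f y + c) -> 'D_v f (x + a) = 'D_v f x.
Proof.
move=> fa; rewrite /derive; f_equal; f_equal; apply/funext => h /=.
by rewrite addrA !fa opprD addrACA subrr addr0.
Qed.

Lemma derive_const1 f x :
  (forall y (c : R), f (y + c *: const_mx 1) = f y + c) ->
  'D_(const_mx 1) f x = 1.
Proof.
move=> fc; rewrite /derive; apply: lim_near_cst => //=.
near=> h.
have h_neq0 : h != 0 by near: h; exact: nbhs_dnbhs_neq.
by rewrite [h *: _ + x]addrC fc addrAC subrr add0r /GRing.scale /= mulVf.
Unshelve. all: by end_near.
Qed.

Lemma difference_quotient_comp_scale f (k : R) x v :
  (fun h : R => h^-1 *: (((fun y => f (k *: y)) \o shift x) (h *: v)
                          - f (k *: x))) =
  (fun h : R => h^-1 *: ((f \o shift (k *: x)) (h *: (k *: v)) - f (k *: x))).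
Proof.
apply/funext => h /=; congr (_ *: (f _ - _)).
by rewrite scalerDr !scalerA mulrC.
Qed.

Lemma derive_comp_scale f (k : R) x v :
  'D_v (fun y => f (k *: y)) x = 'D_(k *: v) f (k *: x).
Proof. by rewrite /derive difference_quotient_comp_scale. Qed.

Lemma derivable_comp_scale f (k : R) x v :
  derivable f (k *: x) (k *: v) -> derivable (fun y => f (k *: y)) x v.
Proof. by rewrite /derivable difference_quotient_comp_scale. Qed.

Lemma deriveZ_dir f (k : R) x v :
  differentiable f x -> 'D_(k *: v) f x = k * 'D_v f x.
Proof. by move=> df; rewrite !deriveE // linearZ. Qed.

Lemma sum_partial f x : differentiable f x ->
  \sum_i partial i f x = 'D_(const_mx 1) f x.
Proof.
move=> df; rewrite /partial.
under eq_bigr do rewrite deriveE //.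
rewrite deriveE // -linear_sum; congr ('d f x _).
apply/matrixP => a j; rewrite summxE !mxE (bigD1 j) //= !mxE big1 ?addr0.
  by rewrite !eqxx ord1.
by move=> i ij; rewrite mxE [j == i]eq_sym (negbTE ij) andbF.
Qed.

Lemma derive_expR_comp f x v : differentiable f x ->
  'D_v (fun y => expR (f y)) x = expR (f x) * 'D_v f x.
Proof.
move=> df.
have dexp : differentiable (@expR R) (f x).
  by apply/derivable1_diffP; exact: derivable_expR.
rewrite deriveE; last exact: differentiable_comp.
rewrite (diff_comp df dexp) /= (diff1E dexp) /= derive1E.
have -> : derive (@expR R) (f x) 1 = expR (f x).
  by have := @derive_expR R; move/(congr1 (fun g => g (f x))).
by rewrite -deriveE // mulrC.
Qed.

End DirectionalDerivatives.

Section Gradient.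
Variables (R : realType) (N : nat) (f : 'rV[R]_N -> R).
Hypothesis f_diff : forall x, differentiable f x.

Lemma grad_expR_comp x :
  grad (fun y => expR (f y)) x = expR (f x) *: grad f x.
Proof. by apply/matrixP => a j; rewrite !mxE /partial derive_expR_comp. Qed.

Lemma grad_comp_scale (k : R) x : k != 0 ->
  grad (fun y => k * f (k^-1 *: y)) x = grad f (k^-1 *: x).
Proof.
move=> k_neq0; apply/matrixP => a j; rewrite !mxE /partial.
have dv : derivable (fun y => f (k^-1 *: y)) x (delta_mx ord0 j).
  by apply: derivable_comp_scale; exact: diff_derivable.
by rewrite (deriveZ k dv) derive_comp_scale deriveZ_dir //; exact: mulVKf.
Qed.

Hypothesis f_shift : forall y (c : R), f (y + c *: const_mx 1) = f y + c.

Lemma grad_shift y (c : R) : grad f (y + c *: const_mx 1) = grad f y.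
Proof.
apply/matrixP => a j; rewrite !mxE /partial.
exact: derive_shift_equivariant (f_shift ^~ c).
Qed.

Lemma sum_grad x : \sum_i grad f x ord0 i = 1.
Proof.
under eq_bigr do rewrite mxE.
by rewrite sum_partial // derive_const1.
Qed.

End Gradient.

Lemma coord_normalize (F : fieldType) (n : nat) (v : 'rV[F]_n) (k : F) j :
  \sum_i v ord0 i = 1 -> k != 0 ->
  v ord0 j = (k *: v) ord0 j / \sum_i (k *: v) ord0 i.
Proof.
move=> v_sum1 k_neq0; under eq_bigr do rewrite mxE.
by rewrite mxE -mulr_sumr v_sum1 mulr1 mulrC mulKf.
Qed.

Section VectorExp.
Context {R : realType} {N : nat}.

Lemma vlog_vexp (z : 'rV[R]_N) : vlog (vexp z) = z.
Proof. by apply/matrixP => a j; rewrite !mxE expRK. Qed.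

Lemma posv_vexp (z : 'rV[R]_N) : posv (vexp z).
Proof. by move=> j; rewrite mxE expR_gt0. Qed.

Lemma cumulS (u : nat -> 'rV[R]_N) t : cumul u t.+1 = cumul u t + u t.+1.
Proof. by rewrite /cumul big_nat_recr. Qed.

End VectorExp.

Section SSA.
Variables (R : realType) (N : nat) (d : measure_display)
  (Omega : measurableType d) (P : probability Omega R)
  (eps : 'I_N -> Omega -> R) (eta : R) (u : nat -> 'rV[R]_N)
  (Phi : 'rV[R]_N -> 'rV[R]_N).
Hypotheses (A1 : assumption1 P eps) (N_gt0 : (0 < N)%N)
  (phi1_diff : forall x, differentiable (phi P eps 1) x) (eta_gt0 : 0 < eta)
  (Hmap_pos : forall y, posv y -> posv (Hmap P eps y))
  (Phi_Hmap : forall y, posv y -> Phi (Hmap P eps y) = y).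

Let f := phi P eps 1.
Let x := ssa P eps eta u.
Let f_shift : forall y c, f (y + c *: const_mx 1) = f y + c :=
  @phi1_shift R N d Omega P eps A1 N_gt0.

Lemma Hmap_vexp z : Hmap P eps (vexp z) = expR (f z) *: grad f z.
Proof. by rewrite /Hmap vlog_vexp grad_expR_comp. Qed.

Lemma ssaE t : x t = grad f (eta^-1 *: cumul u t.-1).
Proof.
rewrite /x /ssa -grad_comp_scale ?gt_eqF //.
by congr grad; apply/funext => theta; rewrite phi_scale.
Qed.

Lemma ssa_pos t : posv (x t).
Proof.
move=> j; have := Hmap_pos _ (posv_vexp (eta^-1 *: cumul u t.-1)) j.
by rewrite Hmap_vexp mxE pmulr_rgt0 ?expR_gt0 // ssaE.
Qed.

Lemma Phi_ssa t : let z := eta^-1 *: cumul u t in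
  Phi (x t.+1) = vexp (z + (- f z) *: const_mx 1).
Proof.
move=> z; rewrite ssaE /= -[RHS]Phi_Hmap; last exact: posv_vexp.
by rewrite Hmap_vexp f_shift grad_shift // addrN expR0 scale1r.
Qed.

Lemma ssaS t j :
  let v := vexp (eta^-1 *: u t.+1 + vlog (Phi (x t.+1))) in
  x t.+2 ord0 j = Hmap P eps v ord0 j / \sum_i Hmap P eps v ord0 i.
Proof.
rewrite /= Phi_ssa vlog_vexp addrA -scalerDr [u _ + _]addrC -cumulS Hmap_vexp.
rewrite f_shift grad_shift // ssaE.
by apply: coord_normalize; rewrite ?sum_grad // gt_eqF ?expR_gt0.
Qed.

End SSA.

Theorem proposition4 (R : realType) (N : nat) (d : measure_display)
  (Omega : measurableType d) (P : probability Omega R)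
  (eps : 'I_N -> Omega -> R) (L eta : R) (Phi : 'rV[R]_N -> 'rV[R]_N)
  (T : nat) (u : nat -> 'rV[R]_N) :
  (2 <= N)%N ->
  assumption1 P eps ->
  assumption2 P eps L ->
  0 < eta ->
  (* H is a bijection of R^N_{++} onto itself with inverse Phi *)
  (forall y, posv y -> posv (Hmap P eps y)) ->
  (forall x, posv x -> posv (Phi x)) ->
  (forall y, posv y -> Phi (Hmap P eps y) = y) ->
  (forall x, posv x -> Hmap P eps (Phi x) = x) ->
  (forall t, (1 <= t <= T)%N -> posv (ssa P eps eta u t)) /\
  (forall t, (1 <= t)%N -> (t.+1 <= T)%N -> forall j : 'I_N,
     let v := vexp (eta^-1 *: u t + vlog (Phi (ssa P eps eta u t))) in
     ssa P eps eta u t.+1 ord0 j =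
       Hmap P eps v ord0 j / \sum_(i < N) Hmap P eps v ord0 i).
Proof.
move=> N_ge2 A1 [[phi1_diff _] _] eta_gt0 Hmap_pos _ Phi_Hmap _.
have N_gt0 : (0 < N)%N by apply: leq_trans N_ge2.
split=> [t _ | [//|t] _ _ j]; first exact: ssa_pos.
exact: ssaS.
Qed.
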